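(* Let $Y$ be a compact metric space, $X:=Z\times Y$, fix a countable base for the topology of $X$, and for each finite open cover $\mathcal{U}$ of $X$ by basic sets and each $k\in\mathbb{N}$ let $H_{\mathcal{U},k}=\{\alpha\in\overline{\mathcal{S}(\zeta\times\mathrm{id})} : \lim_{n\to\infty}\mathcal{D}(\mathcal{U},\alpha,n)/n<1/k\}$. Then: (1) $H_{\mathcal{U},k}$ is dense in $\overline{\mathcal{S}(\zeta\times\mathrm{id})}$; (2) $H_{\mathcal{U},k}$ is open in $\overline{\mathcal{S}(\zeta\times\mathrm{id})}$; (3) if $\alpha\in\bigcap_{\mathcal{U},k}H_{\mathcal{U},k}$ then $\mathrm{mdim}(\alpha)=0$.
   Context: $(Z,\zeta)$ is the point-like minimal system of Deeley–Putnam–Strung associated to a minimal diffeomorphism of an odd-dimensional sphere $S^d$, $d\ge3$: $Z$ is an infinite compact connected metric space of finite covering dimension with the $K$-theory and Čech cohomology of a point, and $\zeta$ a minimal homeomorphism of $Z$. $\mathrm{Homeo}(X)$ carries the metric $d(g,h)=\sup_x d(g(x),h(x))+\sup_x d(g^{-1}(x),h^{-1}(x))$ and closures are taken there. $\mathcal{S}(\zeta\times\mathrm{id})=\{G^{-1}\circ(\zeta\times\mathrm{id})\circ G : G\in\mathrm{Homeo}(X),\ G(z,y)=(z,g_z(y))$ with $z\mapsto g_z$ a continuous map $Z\to\mathrm{Homeo}(Y)\}$. For a finite open cover $\mathcal{U}$: $\mathrm{ord}(\mathcal{U})=\max_x\sum_{U\in\mathcal{U}}\chi_U(x)-1$, $\mathcal{D}(\mathcal{U})=\min$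 of $\mathrm{ord}(\mathcal{V})$ over finite open refinements $\mathcal{V}$, $\mathcal{D}(\mathcal{U},\alpha,n)=\mathcal{D}(\mathcal{U}\vee\alpha^{-1}\mathcal{U}\vee\cdots\vee\alpha^{-n+1}\mathcal{U})$ (the limit of $\mathcal{D}(\mathcal{U},\alpha,n)/n$ exists and equals the infimum), and $\mathrm{mdim}(\alpha)=\sup_{\mathcal{U}}\lim_n\mathcal{D}(\mathcal{U},\alpha,n)/n$. *)

From Stdlib Require Import Reals List ClassicalEpsilon.
From Coquelicot Require Import Coquelicot.
Open Scope R_scope.


Definition is_metric {T : Type} (d : T -> T -> R) : Prop :=
  (forall x y, 0 <= d x y) /\ (forall x y, d x y = 0 <-> x = y) /\
  (forall x y, d x y = d y x) /\ (forall x y z, d x z <= d x y + d y z).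

Definition m_open {T : Type} (d : T -> T -> R) (O : T -> Prop) : Prop :=
  forall x, O x -> exists eps, 0 < eps /\ forall y, d x y < eps -> O y.

Definition m_closed {T : Type} (d : T -> T -> R) (C : T -> Prop) : Prop :=
  m_open d (fun x => ~ C x).

Definition m_compact {T : Type} (d : T -> T -> R) : Prop :=
  forall (I : Type) (O : I -> T -> Prop),
    (forall i, m_open d (O i)) -> (forall x, exists i, O i x) ->
    exists l : list I, forall x, exists i, In i l /\ O i x.

Definition m_connected {T : Type} (d : T -> T -> R) : Prop :=
  forall A B : T -> Prop, m_open d A -> m_open d B ->
    (forall x, A x \/ B x) -> (forall x, ~ (A x /\ B x)) ->
    (forall x, ~ A x) \/ (forall x, ~ B x).

Definition m_infinite (T : Type) : Prop := forall l : list T, exists x, ~ In x l.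

Definition m_cont {A B : Type} (dA : A -> A -> R) (dB : B -> B -> R) (f : A -> B) :=
  forall x eps, 0 < eps -> exists delta, 0 < delta /\
    forall y, dA x y < delta -> dB (f x) (f y) < eps.

Definition dprod {A B : Type} (dA : A -> A -> R) (dB : B -> B -> R) (p q : A * B) : R :=
  Rmax (dA (fst p) (fst q)) (dB (snd p) (snd q)).

Record homeo {T : Type} (d : T -> T -> R) := Homeo {
  hf : T -> T; hg : T -> T;
  hfg : forall x, hf (hg x) = x; hgf : forall x, hg (hf x) = x;
  hf_cont : m_cont d d hf; hg_cont : m_cont d d hg }.
Arguments hf {T d}. Arguments hg {T d}.

(* d(f,g) < eps, where d(f,g) = sup_x d(f x, g x) + sup_x d(f^-1 x, g^-1 x);
   written out: the two sups are bounded by some a, b with a + b < eps. *)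
Definition hdist_lt {T : Type} (d : T -> T -> R) (f g : homeo d) (eps : R) : Prop :=
  exists a b, a + b < eps /\ (forall x, d (hf f x) (hf g x) <= a) /\
                               (forall x, d (hg f x) (hg g x) <= b).

Definition in_closure {T : Type} (d : T -> T -> R) (S : homeo d -> Prop) (a : homeo d) : Prop :=
  forall eps, 0 < eps -> exists b, S b /\ hdist_lt d a b eps.

Definition minimal_homeo {T : Type} (d : T -> T -> R) (z : homeo d) : Prop :=
  forall x (O : T -> Prop), m_open d O -> (exists y, O y) ->
    exists n : nat, O (Nat.iter n (hf z) x) \/ O (Nat.iter n (hg z) x).

Definition cover := fun (T : Type) => list (T -> Prop).

Definition open_cover {T : Type} (d : T -> T -> R) (U : list (T -> Prop)) : Prop :=
  (forall A, In A U -> m_open d A) /\ (forall x, exists A, In A U /\ A x).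

Definition refines {T : Type} (V U : list (T -> Prop)) : Prop :=
  forall B, In B V -> exists A, In A U /\ forall x, B x -> A x.

(* number of members of U containing x (counted with multiplicity) *)
Definition cnt {T : Type} (x : T) (U : list (T -> Prop)) : nat :=
  length (filter (fun A => if excluded_middle_informative (A x) then true else false) U).

(* ord(U) <= m  iff  max_x sum_U chi_U(x) - 1 <= m *)
Definition ord_le {T : Type} (U : list (T -> Prop)) (m : nat) : Prop :=
  forall x, (cnt x U <= m + 1)%nat.

Definition D_le {T : Type} (d : T -> T -> R) (U : list (T -> Prop)) (m : nat) : Prop :=
  exists V, open_cover d V /\ refines V U /\ ord_le V m.

Definition Dcov {T : Type} (d : T -> T -> R) (U : list (T -> Prop)) : nat :=
  epsilon (inhabits 0%nat)
    (fun m => D_le d U m /\ forall m', D_le d U m' -> (m <= m')%nat).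

Definition join {T : Type} (U V : list (T -> Prop)) : list (T -> Prop) :=
  flat_map (fun A => map (fun B => fun x => A x /\ B x) V) U.

Definition preim {T : Type} (f : T -> T) (U : list (T -> Prop)) : list (T -> Prop) :=
  map (fun A => fun x => A (f x)) U.

(* U v a^-1 U v ... v a^-(n-1) U  (the trivial cover {X} for n = 0) *)
Fixpoint joinN {T : Type} (U : list (T -> Prop)) (a : T -> T) (n : nat) : list (T -> Prop) :=
  match n with
  | O => (fun _ => True) :: nil
  | S n' => join (joinN U a n') (preim (Nat.iter n' a) U)
  end.

Definition Dn {T : Type} (d : T -> T -> R) (U : list (T -> Prop)) (a : homeo d) (n : nat) : nat :=
  Dcov d (joinN U (hf a) n).

Definition Dlim {T : Type} (d : T -> T -> R) (U : list (T -> Prop)) (a : homeo d) : Rbar :=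
  Lim_seq (fun n => INR (Dn d U a n) / INR n).

Definition mdim {T : Type} (d : T -> T -> R) (a : homeo d) : Rbar :=
  Rbar_lub (fun r => exists U, open_cover d U /\ r = Dlim d U a).

Definition covdim_le {T : Type} (d : T -> T -> R) (m : nat) : Prop :=
  forall U, open_cover d U -> D_le d U m.

Definition is_base {T : Type} (d : T -> T -> R) (B : nat -> T -> Prop) : Prop :=
  (forall n, m_open d (B n)) /\
  (forall O, m_open d O -> forall x, O x -> exists n, B n x /\ forall y, B n y -> O y).

Definition in_S {Z Y : Type} (dZ : Z -> Z -> R) (dY : Y -> Y -> R) (zeta : homeo dZ)
  (b : homeo (dprod dZ dY)) : Prop :=
  exists (G : homeo (dprod dZ dY)) (g : Z -> homeo dY),
    (forall z eps, 0 < eps -> exists delta, 0 < delta /\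
        forall z', dZ z z' < delta -> hdist_lt dY (g z) (g z') eps) /\
    (forall z y, hf G (z, y) = (z, hf (g z) y)) /\
    (forall p, hf b p = hg G (hf zeta (fst (hf G p)), snd (hf G p))).

Definition in_clS {Z Y : Type} (dZ : Z -> Z -> R) (dY : Y -> Y -> R) (zeta : homeo dZ) :=
  in_closure (dprod dZ dY) (in_S dZ dY zeta).

(* H_{U,k} for the basic cover indexed by l *)
Definition H_Uk {Z Y : Type} (dZ : Z -> Z -> R) (dY : Y -> Y -> R) (zeta : homeo dZ)
  (B : nat -> Z * Y -> Prop) (l : list nat) (k : nat) (a : homeo (dprod dZ dY)) : Prop :=
  in_clS dZ dY zeta a /\ Rbar_lt (Dlim (dprod dZ dY) (map B l) a) (Finite (1 / INR k)).

Definition basic_cover {T : Type} (B : nat -> T -> Prop) (l : list nat) : Prop :=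
  forall x, exists n, In n l /\ B n x.

From Stdlib Require Import Reals List Lra Lia Wf_nat ClassicalEpsilon Classical.
From Coquelicot Require Import Coquelicot.
Open Scope R_scope.

(* A conjugate of [zeta x id] by a homeomorphism G has bounded D(U, -, n): pull U back by G,
   take a Lebesgue number lam, and cover Z x Y by products of an m-dimensional refinement of the
   n-fold join of lam/2-balls of Z with a fixed finite family of lam/2-balls of Y, whose order is
   at most (m + 1) times the size of that family.  Hence its mean dimension is 0, which gives
   density.  For openness, the estimate D(U v V) <= D(U) + D(V) + 1 (from a Lipschitz
   "staircase" refinement) makes n |-> D(U, a, n) + 1 subadditive, so lim D(U, a, n) / n is at
   most (D(U, a, n0) + 1) / n0 for every n0, and a Lebesgue-number argument shows that
   D(U, -, n0) is upper semicontinuous on Homeo(X).  Finally every open cover is refined by a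
   basic one. *)

Lemma least_nat_exists (P : nat -> Prop) :
  (exists n, P n) -> exists n, P n /\ forall m, P m -> (n <= m)%nat.
Proof.
  intros Hex.
  destruct (dec_inh_nat_subset_has_unique_least_element P (fun n => classic (P n)) Hex)
    as (n & Hn & _).
  exists n. exact Hn.
Qed.

Lemma list_choice {A B} (P : A -> B -> Prop) (l : list A) :
  (forall a, In a l -> exists b, P a b) ->
  exists lb : list B, forall a, In a l -> exists b, In b lb /\ P a b.
Proof.
  induction l as [|a l IH]; intros H.
  - exists nil. intros a [].
  - destruct (H a (or_introl eq_refl)) as (b & Hb).
    destruct IH as (lb & Hlb). { intros a' Ha'. apply H. now right. }
    exists (b :: lb). intros a' [<- | Ha'].
    + exists b. split; [now left | exact Hb].
    + destruct (Hlb a' Ha') as (b' & Hb' & HP). exists b'. split; [now right | exact HP].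
Qed.

Lemma list_min_pos {I} (l : list I) (r : I -> R) :
  (forall i, In i l -> 0 < r i) -> exists del, 0 < del /\ forall i, In i l -> del <= r i.
Proof.
  induction l as [|a l IH]; intros H.
  - exists 1. split; [lra | intros i []].
  - destruct IH as (del & Hdel & Hl). { intros i Hi. apply H. now right. }
    exists (Rmin del (r a)). split.
    + apply Rmin_glb_lt; auto. apply H. now left.
    + intros i [<- | Hi]; [apply Rmin_r |].
      eapply Rle_trans; [apply Rmin_l | auto].
Qed.

Definition asbool (P : Prop) : bool := if excluded_middle_informative P then true else false.

Lemma asbool_true (P : Prop) : asbool P = true <-> P.
Proof. unfold asbool. destruct (excluded_middle_informative P); split; auto; discriminate. Qed.

Lemma asbool_iff (P Q : Prop) : (P <-> Q) -> asbool P = asbool Q.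
Proof.
  intros H. unfold asbool.
  destruct (excluded_middle_informative P), (excluded_middle_informative Q); tauto.
Qed.

Section Counting.
Context {T : Type}.
Implicit Types (x : T) (U V : list (T -> Prop)).

Lemma cnt_filter x U : cnt x U = length (filter (fun A => asbool (A x)) U).
Proof. reflexivity. Qed.

Lemma cnt_le_length x U : (cnt x U <= length U)%nat.
Proof. apply filter_length_le. Qed.

Lemma cnt_cons x A U : cnt x (A :: U) = ((if asbool (A x) then 1 else 0) + cnt x U)%nat.
Proof. rewrite !cnt_filter. simpl. now destruct (asbool (A x)). Qed.

Lemma cnt_app x U V : cnt x (U ++ V) = (cnt x U + cnt x V)%nat.
Proof. rewrite !cnt_filter, filter_app, length_app. reflexivity. Qed.

Lemma cnt_map {I} x (F : I -> T -> Prop) l :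
  cnt x (map F l) = length (filter (fun i => asbool (F i x)) l).
Proof.
  induction l as [|a l IH]; [reflexivity|].
  simpl map. rewrite cnt_cons, IH. simpl. now destruct (asbool (F a x)).
Qed.

Lemma cnt_map_le {I} x (F G : I -> T -> Prop) l :
  (forall i, In i l -> F i x -> G i x) -> (cnt x (map F l) <= cnt x (map G l))%nat.
Proof.
  induction l as [|a l IH]; intros H; [simpl; lia|].
  simpl map. rewrite !cnt_cons.
  assert (Hl := IH (fun i Hi => H i (or_intror Hi))).
  destruct (asbool (F a x)) eqn:EF; [|destruct (asbool (G a x)); lia].
  apply (asbool_true (F a x)) in EF.
  assert (EG : asbool (G a x) = true) by (apply asbool_true, H; [now left | exact EF]).
  rewrite EG. lia.
Qed.

Lemma cnt_nth x U :
  cnt x U = length (filter (fun i => asbool (nth i U (fun _ => False) x)) (seq 0 (length U))).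
Proof.
  induction U as [|A U IH]; [reflexivity|].
  rewrite cnt_cons, IH. cbn [length seq filter nth].
  rewrite <- seq_shift, filter_map_swap. cbn [length].
  destruct (asbool (A x)); cbn [length]; now rewrite length_map.
Qed.

Lemma cnt_zero x U : (forall A, In A U -> ~ A x) -> cnt x U = 0%nat.
Proof.
  induction U as [|A U IH]; intros H; [reflexivity|].
  rewrite cnt_cons, IH by (intros B HB; apply H; now right).
  destruct (asbool (A x)) eqn:E; [|reflexivity].
  apply (asbool_true (A x)) in E. exfalso. apply (H A); [now left | exact E].
Qed.

End Counting.

Section Metric.
Context {T : Type} (d : T -> T -> R) (hm : is_metric d).

Lemma met_pos x y : 0 <= d x y.
Proof. apply hm. Qed.

Lemma met_refl x : d x x = 0.
Proof. now apply hm. Qed.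

Lemma met_sym x y : d x y = d y x.
Proof. apply hm. Qed.

Lemma met_tri x y z : d x z <= d x y + d y z.
Proof. apply hm. Qed.

Lemma m_open_ball c r : m_open d (fun y => d c y < r).
Proof.
  intros x Hx. exists (r - d c x). split; [lra|].
  intros y Hy. pose proof (met_tri c x y). lra.
Qed.

Lemma m_open_True : m_open d (fun _ => True).
Proof. intros x _. exists 1. split; auto; lra. Qed.

Lemma m_open_and A B : m_open d A -> m_open d B -> m_open d (fun x => A x /\ B x).
Proof.
  intros HA HB x [Ax Bx].
  destruct (HA _ Ax) as (e1 & He1 & H1), (HB _ Bx) as (e2 & He2 & H2).
  exists (Rmin e1 e2). split; [now apply Rmin_glb_lt|].
  intros y Hy. split; [apply H1 | apply H2];
    eapply Rlt_le_trans; eauto; [apply Rmin_l | apply Rmin_r].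
Qed.

Lemma m_open_preim {S} (dS : S -> S -> R) (f : T -> S) O :
  m_cont d dS f -> m_open dS O -> m_open d (fun x => O (f x)).
Proof.
  intros Hf HO x Hx. destruct (HO _ Hx) as (e & He & H).
  destruct (Hf x e He) as (del & Hdel & Hf'). exists del. split; auto.
Qed.

Lemma m_cont_comp f g : m_cont d d f -> m_cont d d g -> m_cont d d (fun x => f (g x)).
Proof.
  intros Hf Hg x e He. destruct (Hf (g x) e He) as (e1 & He1 & H1).
  destruct (Hg x e1 He1) as (e2 & He2 & H2). exists e2. split; auto.
Qed.

Lemma m_cont_iter f : m_cont d d f -> forall j, m_cont d d (Nat.iter j f).
Proof.
  intros Hf j. induction j as [|j IH]; simpl.
  - intros x e He. exists e. split; auto.
  - now apply (m_cont_comp f (Nat.iter j f)).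
Qed.

End Metric.

Lemma iter_S_r {A} (f : A -> A) j y : Nat.iter (S j) f y = Nat.iter j f (f y).
Proof. replace (S j) with (j + 1)%nat by lia. now rewrite Nat.iter_add. Qed.

Lemma iter_hg_hf {T} (d : T -> T -> R) (a : homeo d) j x :
  Nat.iter j (hg a) (Nat.iter j (hf a) x) = x.
Proof.
  revert x. induction j as [|j IH]; intros x; [reflexivity|].
  rewrite iter_S_r. simpl. now rewrite hgf.
Qed.

Lemma iter_hf_hg {T} (d : T -> T -> R) (a : homeo d) j x :
  Nat.iter j (hf a) (Nat.iter j (hg a) x) = x.
Proof.
  revert x. induction j as [|j IH]; intros x; [reflexivity|].
  rewrite iter_S_r. simpl. now rewrite hfg.
Qed.

(** * Joins and refinements of covers *)

Section Covers.
Context {T : Type}.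
Implicit Types (U V W : list (T -> Prop)) (f : T -> T).

Lemma in_join U V E :
  In E (join U V) <-> exists A B, In A U /\ In B V /\ E = (fun x => A x /\ B x).
Proof.
  unfold join. rewrite in_flat_map. split.
  - intros (A & HA & HE). apply in_map_iff in HE. destruct HE as (B & <- & HB). eauto.
  - intros (A & B & HA & HB & ->). exists A. split; auto. apply in_map_iff. eauto.
Qed.

Lemma in_preim f U E : In E (preim f U) <-> exists A, In A U /\ E = (fun x => A (f x)).
Proof. unfold preim. rewrite in_map_iff. split; intros (A & H1 & H2); eauto. Qed.

Lemma cnt_preim x f U : cnt x (preim f U) = cnt (f x) U.
Proof.
  induction U as [|A U IH]; [reflexivity|].
  unfold preim in *. simpl map. now rewrite !cnt_cons, IH.
Qed.

Lemma joinN_elim U f n E :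
  In E (joinN U f n) ->
  forall j, (j < n)%nat -> exists A, In A U /\ forall x, E x -> A (Nat.iter j f x).
Proof.
  revert E. induction n as [|n IH]; intros E HE j Hj; [lia|].
  simpl in HE. apply in_join in HE. destruct HE as (E1 & E2 & H1 & H2 & ->).
  apply in_preim in H2. destruct H2 as (A & HA & ->).
  destruct (Nat.eq_dec j n) as [-> | Hne].
  - exists A. split; auto. now intros x [_ Hx].
  - destruct (IH E1 H1 j ltac:(lia)) as (A' & HA' & HE1).
    exists A'. split; auto. intros x [Hx _]. auto.
Qed.

Lemma joinN_intro U f n (E : T -> Prop) :
  (forall j, (j < n)%nat -> exists A, In A U /\ forall x, E x -> A (Nat.iter j f x)) ->
  exists E', In E' (joinN U f n) /\ forall x, E x -> E' x.
Proof.
  induction n as [|n IH]; intros H.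
  - exists (fun _ => True). simpl. auto.
  - destruct IH as (E1 & H1 & HE1). { intros j Hj. apply H. lia. }
    destruct (H n ltac:(lia)) as (A & HA & HEA).
    exists (fun x => E1 x /\ A (Nat.iter n f x)). split; [|auto].
    simpl. apply in_join. exists E1, (fun x => A (Nat.iter n f x)).
    repeat split; auto. apply in_preim. eauto.
Qed.

Lemma refines_refl U : refines U U.
Proof. intros A HA. eauto. Qed.

Lemma refines_trans U V W : refines U V -> refines V W -> refines U W.
Proof.
  intros H1 H2 A HA. destruct (H1 A HA) as (B & HB & HAB).
  destruct (H2 B HB) as (C & HC & HBC). eauto.
Qed.

Lemma refines_joinN U V f n : refines V U -> refines (joinN V f n) (joinN U f n).
Proof.
  intros HVU E HE. apply joinN_intro. intros j Hj.
  destruct (joinN_elim V f n E HE j Hj) as (A & HA & HEA).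
  destruct (HVU A HA) as (A' & HA' & HAA'). eauto.
Qed.

Lemma refines_joinN_add U f m n :
  refines (join (joinN U f m) (preim (Nat.iter m f) (joinN U f n))) (joinN U f (m + n)).
Proof.
  intros E HE. apply in_join in HE. destruct HE as (E1 & E2' & H1 & H2 & ->).
  apply in_preim in H2. destruct H2 as (E2 & H2 & ->).
  apply joinN_intro. intros j Hj. destruct (Nat.le_gt_cases m j) as [Hmj | Hjm].
  - destruct (joinN_elim U f n E2 H2 (j - m) ltac:(lia)) as (A & HA & HE2).
    exists A. split; auto. intros x [_ Hx]. specialize (HE2 _ Hx).
    rewrite <- Nat.iter_add in HE2. now replace (j - m + m)%nat with j in HE2 by lia.
  - destruct (joinN_elim U f m E1 H1 j Hjm) as (A & HA & HE1).
    exists A. split; auto. intros x [Hx _]. auto.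
Qed.

Context (d : T -> T -> R).

Lemma open_cover_trivial : open_cover d ((fun _ => True) :: nil).
Proof.
  split.
  - intros A [<- | []]. apply m_open_True.
  - intros x. exists (fun _ => True). simpl. auto.
Qed.

Lemma open_cover_preim f U : m_cont d d f -> open_cover d U -> open_cover d (preim f U).
Proof.
  intros Hf [Ho Hc]. split.
  - intros E HE. apply in_preim in HE. destruct HE as (A & HA & ->).
    apply (m_open_preim d d); auto.
  - intros x. destruct (Hc (f x)) as (A & HA & Ax).
    exists (fun y => A (f y)). split; auto. apply in_preim. eauto.
Qed.

Lemma open_cover_join U V : open_cover d U -> open_cover d V -> open_cover d (join U V).
Proof.
  intros [Ho1 Hc1] [Ho2 Hc2]. split.
  - intros E HE. apply in_join in HE. destruct HE as (A & B & HA & HB & ->).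
    apply m_open_and; auto.
  - intros x. destruct (Hc1 x) as (A & HA & Ax), (Hc2 x) as (B & HB & Bx).
    exists (fun y => A y /\ B y). split; auto. apply in_join. eauto 10.
Qed.

Lemma open_cover_joinN U f n : m_cont d d f -> open_cover d U -> open_cover d (joinN U f n).
Proof.
  intros Hf HU. induction n as [|n IH]; simpl; [apply open_cover_trivial|].
  apply open_cover_join; auto. apply open_cover_preim; auto. now apply m_cont_iter.
Qed.

Lemma refines_preim_joinN_conj (G : homeo d) (b k : T -> T) U n :
  (forall p, b p = hg G (k (hf G p))) ->
  refines (preim (hf G) (joinN (preim (hg G) U) k n)) (joinN U b n).
Proof.
  intros Hb E HE. apply in_preim in HE. destruct HE as (E' & HE' & ->).
  assert (Hiter : forall j p, Nat.iter j b p = hg G (Nat.iter j k (hf G p))).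
  { induction j as [|j IH]; intros p; simpl; [now rewrite hgf|]. now rewrite Hb, IH, hfg. }
  apply joinN_intro. intros j Hj.
  destruct (joinN_elim _ k n E' HE' j Hj) as (A' & HA' & HE'A').
  apply in_preim in HA'. destruct HA' as (A & HA & ->).
  exists A. split; auto. intros p Hp. rewrite Hiter. now apply HE'A'.
Qed.

End Covers.

Lemma NoDup_list_prod {A B} (l : list A) (l' : list B) :
  NoDup l -> NoDup l' -> NoDup (list_prod l l').
Proof.
  induction l as [|a l IH]; intros H H'; simpl; [constructor|].
  inversion H as [|? ? Hal Hl]; subst. apply NoDup_app; auto.
  - apply NoDup_map_NoDup_ForallPairs; auto. intros u v _ _ E. now inversion E.
  - intros [u v] Hm Hp. apply in_map_iff in Hm. destruct Hm as (w & E & _).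
    inversion E; subst. apply in_prod_iff in Hp. tauto.
Qed.

Definition overlap (u v : nat -> R) (i j : nat) : Prop :=
  u i < v (S j) /\ v j < u (S i) /\ u i < u (S i) /\ v j < v (S j).

Lemma growing_step_unique (w : nat -> R) (hw : Un_growing w) i i' t :
  w i <= t < w (S i) -> w i' <= t < w (S i') -> i = i'.
Proof.
  intros Hi Hi'. destruct (Nat.lt_trichotomy i i') as [Hlt | [Heq | Hlt]]; auto; exfalso.
  - pose proof (growing_prop w i' (S i) hw Hlt). lra.
  - pose proof (growing_prop w i (S i') hw Hlt). lra.
Qed.

Section Overlap.
Variables (u v : nat -> R).
Hypotheses (hu : Un_growing u) (hv : Un_growing v).

(* Both overlaps contain the largest of the four left endpoints, which pins down the step of [u]
   and the step of [v]. *)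
Lemma overlap_inj i j i' j' :
  overlap u v i j -> overlap u v i' j' ->
  Rmin (u (S i)) (v (S j)) = Rmin (u (S i')) (v (S j')) -> i = i' /\ j = j'.
Proof.
  intros (H1 & H2 & H3 & H4) (H1' & H2' & H3' & H4') Emin.
  set (t := Rmax (Rmax (u i) (v j)) (Rmax (u i') (v j'))).
  assert (Ht : t < Rmin (u (S i)) (v (S j))).
  { unfold t. apply Rmax_lub_lt; [|rewrite Emin]; apply Rmax_lub_lt; apply Rmin_glb_lt; lra. }
  assert (Hmin := Rmin_l (u (S i)) (v (S j))). assert (Hmin' := Rmin_r (u (S i)) (v (S j))).
  rewrite Emin in Hmin, Hmin'.
  assert (Hmin2 := Rmin_l (u (S i')) (v (S j'))). assert (Hmin2' := Rmin_r (u (S i')) (v (S j'))).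
  assert (Hui : u i <= t) by (unfold t; eapply Rle_trans; apply Rmax_l).
  assert (Hvj : v j <= t) by (unfold t; eapply Rle_trans; [apply Rmax_r | apply Rmax_l]).
  assert (Hui' : u i' <= t) by (unfold t; eapply Rle_trans; [apply Rmax_l | apply Rmax_r]).
  assert (Hvj' : v j' <= t) by (unfold t; eapply Rle_trans; apply Rmax_r).
  split; [apply (growing_step_unique u hu i i' t) | apply (growing_step_unique v hv j j' t)];
    lra.
Qed.

(* The map (i, j) |-> min (u (S i)) (v (S j)) injects overlapping pairs into the right endpoints of
   the nonempty steps of u and of v. *)
Lemma overlap_count p q :
  (length (filter (fun ij => asbool (overlap u v (fst ij) (snd ij)))
                  (list_prod (seq 0 p) (seq 0 q)))
   <= length (filter (fun i => asbool (u i < u (S i))%R) (seq 0 p))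
      + length (filter (fun j => asbool (v j < v (S j))%R) (seq 0 q)))%nat.
Proof.
  set (fil := filter _ (list_prod _ _)).
  set (e := fun ij : nat * nat => Rmin (u (S (fst ij))) (v (S (snd ij)))).
  set (L := map (fun i => u (S i)) (filter (fun i => asbool (u i < u (S i))) (seq 0 p)) ++
            map (fun j => v (S j)) (filter (fun j => asbool (v j < v (S j))) (seq 0 q))).
  assert (Hfil : forall ij, In ij fil ->
            (fst ij < p)%nat /\ (snd ij < q)%nat /\ overlap u v (fst ij) (snd ij)).
  { intros [i j] Hij. apply filter_In in Hij. destruct Hij as [Hp Ho].
    apply in_prod_iff in Hp. destruct Hp as [Hi Hj]. apply in_seq in Hi, Hj.
    apply (proj1 (asbool_true _)) in Ho. simpl. split; [lia | split; [lia | exact Ho]]. }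
  assert (Hnd : NoDup (map e fil)).
  { apply NoDup_map_NoDup_ForallPairs.
    - intros [i j] [i' j'] Hij Hij' E.
      destruct (Hfil _ Hij) as (_ & _ & Ho), (Hfil _ Hij') as (_ & _ & Ho').
      destruct (overlap_inj i j i' j' Ho Ho' E). now subst.
    - apply NoDup_filter, NoDup_list_prod; apply seq_NoDup. }
  assert (Hincl : incl (map e fil) L).
  { intros r Hr. apply in_map_iff in Hr. destruct Hr as ([i j] & <- & Hij).
    destruct (Hfil _ Hij) as (Hi & Hj & (_ & _ & Hu & Hv)). simpl in *.
    apply in_or_app. unfold e, Rmin. simpl. destruct (Rle_dec _ _).
    - left. apply (in_map (fun i => u (S i))). apply filter_In.
      split; [apply in_seq; lia | now apply asbool_true].
    - right. apply (in_map (fun j => v (S j))). apply filter_In.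
      split; [apply in_seq; lia | now apply asbool_true]. }
  pose proof (NoDup_incl_length Hnd Hincl) as Hlen.
  unfold L in Hlen. now rewrite length_app, !length_map in Hlen.
Qed.

End Overlap.

Section Staircase.
Context {T : Type} (d : T -> T -> R) (hm : is_metric d).

Definition lipschitz (f : T -> R) (L : R) : Prop :=
  0 <= L /\ forall x y, Rabs (f x - f y) <= L * d x y.

Lemma m_open_lt_lipschitz f g Lf Lg :
  lipschitz f Lf -> lipschitz g Lg -> m_open d (fun x => f x < g x).
Proof.
  intros [Hf0 Hf] [Hg0 Hg] x Hx. exists ((g x - f x) / (Lf + Lg + 1)).
  split; [apply Rdiv_lt_0_compat; lra|].
  intros y Hy. pose proof (met_pos d hm x y) as Hd.
  assert (Hy' : d x y * (Lf + Lg + 1) < g x - f x).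
  { apply (Rmult_lt_compat_r (Lf + Lg + 1)) in Hy; [|lra].
    unfold Rdiv in Hy. rewrite Rmult_assoc, Rinv_l in Hy; lra. }
  pose proof (Hf x y) as Hfxy. pose proof (Hg x y) as Hgxy.
  apply Rabs_le_between' in Hfxy, Hgxy. nra.
Qed.

Definition inner_radius (A : T -> Prop) (x : T) : R :=
  real (Lub_Rbar (fun r => 0 <= r <= 1 /\ forall y, d x y < r -> A y)).

Lemma inner_radius_spec A x :
  0 <= inner_radius A x <= 1 /\
  (forall r, 0 <= r <= 1 -> (forall y, d x y < r -> A y) -> r <= inner_radius A x) /\
  (forall b, (forall r, 0 <= r <= 1 -> (forall y, d x y < r -> A y) -> r <= b) ->
     inner_radius A x <= b).
Proof.
  unfold inner_radius.
  set (E := fun r => 0 <= r <= 1 /\ forall y, d x y < r -> A y).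
  destruct (Lub_Rbar_correct E) as [Hub Hlub].
  assert (H0 : E 0).
  { split; [lra|]. intros y Hy. pose proof (met_pos d hm x y). lra. }
  assert (H1 : is_ub_Rbar E 1) by (intros s [Hs _]; simpl; lra).
  destruct (Lub_Rbar E) as [r| |].
  - pose proof (Hub 0 H0). pose proof (Hlub 1 H1). simpl in *. split; [lra|split].
    + intros s Hs HA. exact (Hub s (conj Hs HA)).
    + intros b Hb. apply (Hlub (Finite b)). intros s [Hs HA]. exact (Hb s Hs HA).
  - exfalso. exact (Hlub 1 H1).
  - exfalso. exact (Hub 0 H0).
Qed.

Lemma inner_radius_pos A x : m_open d A -> (0 < inner_radius A x <-> A x).
Proof.
  intros HA. destruct (inner_radius_spec A x) as (_ & Hr & Hb). split.
  - intros Hpos. apply NNPP. intros Hn.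
    enough (inner_radius A x <= 0) by lra.
    apply Hb. intros r Hr01 HAr. destruct (Rle_dec r 0); auto. exfalso.
    apply Hn, HAr. rewrite (met_refl d hm). lra.
  - intros Ax. destruct (HA x Ax) as (e & He & Hball).
    assert (Hmin : 0 < Rmin e 1) by (apply Rmin_glb_lt; lra).
    enough (Rmin e 1 <= inner_radius A x) by lra.
    apply Hr; [split; [lra | apply Rmin_r]|].
    intros y Hy. apply Hball. eapply Rlt_le_trans; [exact Hy | apply Rmin_l].
Qed.

Lemma inner_radius_le_dist A x y : inner_radius A x <= inner_radius A y + d x y.
Proof.
  destruct (inner_radius_spec A x) as (_ & _ & Hb).
  destruct (inner_radius_spec A y) as ((Hy0 & _) & Hry & _).
  apply Hb. intros r [Hr0 Hr1] HA. destruct (Rle_dec r (d x y)); [lra|].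
  enough (r - d x y <= inner_radius A y) by lra.
  apply Hry.
  - pose proof (met_pos d hm x y). lra.
  - intros w Hw. apply HA. pose proof (met_tri d hm x y w). lra.
Qed.

Lemma inner_radius_lipschitz A : lipschitz (inner_radius A) 1.
Proof.
  split; [lra|]. intros x y. rewrite Rmult_1_l. apply Rabs_le.
  pose proof (inner_radius_le_dist A x y). pose proof (inner_radius_le_dist A y x).
  rewrite (met_sym d hm y x) in *. lra.
Qed.

Fixpoint stair (P : list (T -> Prop)) (i : nat) (x : T) : R :=
  match i with
  | O => 0
  | S i' => stair P i' x + inner_radius (nth i' P (fun _ => False)) x
  end.

Lemma stair_lipschitz P i : lipschitz (stair P i) (INR i).
Proof.
  induction i as [|i [H0 H]]; simpl stair.
  - split; [simpl; lra|]. intros x y. rewrite Rminus_0_r, Rabs_R0. simpl. lra.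
  - split; [apply pos_INR|]. intros x y. rewrite S_INR.
    set (rho := inner_radius (nth i P (fun _ => False))).
    destruct (inner_radius_lipschitz (nth i P (fun _ => False))) as [_ Hr].
    specialize (H x y). specialize (Hr x y). fold rho in Hr.
    replace (stair P i x + rho x - (stair P i y + rho y))
      with ((stair P i x - stair P i y) + (rho x - rho y)) by ring.
    eapply Rle_trans; [apply Rabs_triang | lra].
Qed.

Lemma m_open_nth P i : (forall A, In A P -> m_open d A) -> m_open d (nth i P (fun _ => False)).
Proof.
  intros HP. destruct (nth_in_or_default i P (fun _ => False)) as [Hin | ->]; [now apply HP|].
  intros y [].
Qed.

Lemma stair_growing P x : Un_growing (fun i => stair P i x).
Proof.
  intros i. simpl. destruct (inner_radius_spec (nth i P (fun _ => False)) x) as ((H0 & _) & _).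
  lra.
Qed.

Lemma stair_step P i x : (forall A, In A P -> m_open d A) ->
  (stair P i x < stair P (S i) x <-> nth i P (fun _ => False) x).
Proof.
  intros HP. simpl. rewrite <- inner_radius_pos by now apply m_open_nth. lra.
Qed.

Lemma stair_zero P i x : (forall k, (k < i)%nat -> ~ nth k P (fun _ => False) x) ->
  (forall A, In A P -> m_open d A) -> stair P i x = 0.
Proof.
  intros Hout HP. induction i as [|i IH]; [reflexivity|]. simpl.
  rewrite IH by (intros k Hk; apply Hout; lia).
  destruct (inner_radius_spec (nth i P (fun _ => False)) x) as ((H0 & _) & _).
  destruct (Rle_lt_or_eq_dec 0 _ H0) as [Hpos | <-]; [|lra].
  exfalso. apply (Hout i); [lia|]. now apply (inner_radius_pos _ _ (m_open_nth P i HP)).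
Qed.

End Staircase.

Section Dimension.
Context {T : Type} (d : T -> T -> R) (hm : is_metric d).
Implicit Types (U V P Q : list (T -> Prop)).

Lemma D_le_refines U V m : refines U V -> D_le d U m -> D_le d V m.
Proof.
  intros HUV (W & HW & HWU & Ho). exists W. split; auto. split; auto.
  eapply refines_trans; eauto.
Qed.

Lemma D_le_length U : open_cover d U -> D_le d U (length U).
Proof.
  intros H. exists U. split; auto. split; [apply refines_refl|].
  intros x. pose proof (cnt_le_length x U). lia.
Qed.

Lemma Dcov_spec U : open_cover d U ->
  D_le d U (Dcov d U) /\ forall m, D_le d U m -> (Dcov d U <= m)%nat.
Proof.
  intros H. unfold Dcov. apply epsilon_spec, least_nat_exists.
  exists (length U). now apply D_le_length.
Qed.

Lemma D_le_preim f U m : m_cont d d f -> D_le d U m -> D_le d (preim f U) m.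
Proof.
  intros Hf (V & HV & HVU & Ho). exists (preim f V).
  split; [now apply open_cover_preim|]. split.
  - intros E HE. apply in_preim in HE. destruct HE as (B & HB & ->).
    destruct (HVU B HB) as (A & HA & HBA).
    exists (fun x => A (f x)). split; [apply in_preim; eauto | auto].
  - intros x. rewrite cnt_preim. apply Ho.
Qed.

Lemma stair_steps_cnt P x : (forall A, In A P -> m_open d A) ->
  length (filter (fun i => asbool (stair d P i x < stair d P (S i) x)) (seq 0 (length P)))
  = cnt x P.
Proof.
  intros HP. rewrite cnt_nth. f_equal. apply filter_ext. intros i.
  apply asbool_iff. now apply stair_step.
Qed.

Lemma stair_first_step P x : open_cover d P ->
  exists i, (i < length P)%nat /\ stair d P i x = 0 /\ stair d P i x < stair d P (S i) x.
Proof.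
  intros [HPo HPc].
  destruct (least_nat_exists (fun i => (i < length P)%nat /\ nth i P (fun _ => False) x))
    as (i & (Hi & Hx) & Hleast).
  { destruct (HPc x) as (A & HA & Ax). destruct (In_nth P A (fun _ => False) HA) as (n & Hn & En).
    exists n. rewrite En. auto. }
  assert (H0 : stair d P i x = 0).
  { apply stair_zero; auto. intros k Hk Hxk.
    assert (Hk' : (k < length P)%nat) by lia. specialize (Hleast k (conj Hk' Hxk)). lia. }
  exists i. split; [exact Hi|]. split; [exact H0|]. now apply stair_step.
Qed.

(* Refine by the sets where the [i]-th step of the staircase of [P'] overlaps the [j]-th step of
   that of [Q']: a point lies in at most as many of them as there are steps of [P'] and of [Q']
   containing it. *)
Lemma D_le_join P Q a b : D_le d P a -> D_le d Q b -> D_le d (join P Q) (a + b + 1).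
Proof.
  intros (P' & HP' & HP'P & HP'o) (Q' & HQ' & HQ'Q & HQ'o).
  set (W := fun (ij : nat * nat) (x : T) =>
              overlap (fun i => stair d P' i x) (fun j => stair d Q' j x) (fst ij) (snd ij)).
  set (pairs := list_prod (seq 0 (length P')) (seq 0 (length Q'))).
  exists (map W pairs). split; [split | split].
  - intros E HE. apply in_map_iff in HE. destruct HE as (ij & <- & _).
    unfold W, overlap. repeat apply m_open_and; eapply m_open_lt_lipschitz; eauto;
      apply stair_lipschitz; auto.
  - intros x.
    destruct (stair_first_step P' x HP') as (i & Hi & Hi0 & Hstep_i).
    destruct (stair_first_step Q' x HQ') as (j & Hj & Hj0 & Hstep_j).
    exists (W (i, j)). split.
    + apply in_map, in_prod_iff. split; apply in_seq; lia.
    + unfold W, overlap. cbn [fst snd]. rewrite Hi0, Hj0 in *. lra.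
  - intros E HE. apply in_map_iff in HE. destruct HE as ([i j] & <- & Hij).
    apply in_prod_iff in Hij. destruct Hij as [Hi Hj]. apply in_seq in Hi, Hj.
    destruct (HP'P _ (nth_In P' (fun _ => False) (proj2 Hi))) as (A & HA & HiA).
    destruct (HQ'Q _ (nth_In Q' (fun _ => False) (proj2 Hj))) as (B & HB & HjB).
    exists (fun x => A x /\ B x). split; [apply in_join; eauto 10|].
    intros x (_ & _ & Hsi & Hsj). split.
    + apply HiA. now apply (stair_step d hm P' i x (proj1 HP')).
    + apply HjB. now apply (stair_step d hm Q' j x (proj1 HQ')).
  - intros x. unfold pairs. rewrite cnt_map. unfold W.
    eapply Nat.le_trans; [apply overlap_count; apply stair_growing; auto|]. cbv beta.
    rewrite !stair_steps_cnt by (apply HP' || apply HQ').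
    specialize (HP'o x). specialize (HQ'o x). lia.
Qed.

End Dimension.

(** * Compact metric spaces *)

Section Compact.
Context {T : Type} (d : T -> T -> R) (hm : is_metric d) (hc : m_compact d).

Lemma compact_ball_subcover (P : T -> R -> Prop) :
  (forall x, exists r, 0 < r /\ P x r) ->
  exists l : list (T * R), (forall p, In p l -> 0 < snd p /\ P (fst p) (snd p)) /\
                           forall x, exists p, In p l /\ d (fst p) x < snd p.
Proof.
  intros HP.
  set (I := {p : T * R | 0 < snd p /\ P (fst p) (snd p)}).
  destruct (hc I (fun i y => d (fst (proj1_sig i)) y < snd (proj1_sig i))) as (l & Hl).
  - intros i. now apply m_open_ball.
  - intros x. destruct (HP x) as (r & Hr & Hxr).
    exists (exist _ (x, r) (conj Hr Hxr) : I). simpl. now rewrite (met_refl d hm).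
  - exists (map (@proj1_sig _ _) l). split.
    + intros p Hp. apply in_map_iff in Hp. destruct Hp as (i & <- & _). apply (proj2_sig i).
    + intros x. destruct (Hl x) as (i & Hi & Hx). exists (proj1_sig i).
      split; [now apply in_map | exact Hx].
Qed.

Lemma compact_uniform_radius (P : T -> R -> Prop) :
  (forall x, exists r, 0 < r /\ P x r) ->
  exists lam, 0 < lam /\ forall x, exists c r, P c r /\ d c x < r /\ lam <= r.
Proof.
  intros HP. destruct (compact_ball_subcover P HP) as (l & Hl & Hcov).
  destruct (list_min_pos l snd) as (lam & Hlam & Hmin). { intros p Hp. apply Hl, Hp. }
  exists lam. split; [exact Hlam|]. intros x. destruct (Hcov x) as (p & Hp & Hx).
  exists (fst p), (snd p). split; [apply Hl, Hp|]. split; [exact Hx | now apply Hmin].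
Qed.

Lemma lebesgue_number V : open_cover d V ->
  exists lam, 0 < lam /\ forall x, exists A, In A V /\ forall z, d x z < lam -> A z.
Proof.
  intros [Ho Hcov].
  destruct (compact_uniform_radius
              (fun c r => exists A, In A V /\ forall z, d c z < 2 * r -> A z))
    as (lam & Hlam & H).
  - intros x. destruct (Hcov x) as (A & HA & Ax). destruct (Ho A HA x Ax) as (e & He & Hball).
    exists (e / 2). split; [lra|]. exists A. split; [exact HA|].
    intros z Hz. apply Hball. lra.
  - exists lam. split; [exact Hlam|]. intros x.
    destruct (H x) as (c & r & (A & HA & Hr) & Hcx & Hlr).
    exists A. split; [exact HA|]. intros z Hz. apply Hr.
    pose proof (met_tri d hm c x z). lra.
Qed.

Definition unif_cont (f : T -> T) : Prop :=
  forall eps, 0 < eps -> exists del, 0 < del /\ forall x y, d x y < del -> d (f x) (f y) < eps.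

Lemma unif_cont_compact f : m_cont d d f -> unif_cont f.
Proof.
  intros Hf eps Heps.
  destruct (compact_uniform_radius
              (fun c r => forall y, d c y < 2 * r -> d (f c) (f y) < eps / 2))
    as (lam & Hlam & H).
  - intros x. destruct (Hf x (eps / 2) ltac:(lra)) as (del & Hdel & Hball).
    exists (del / 2). split; [lra|]. intros y Hy. apply Hball. lra.
  - exists lam. split; [exact Hlam|]. intros x y Hxy.
    destruct (H x) as (c & r & Hr & Hcx & Hlr).
    assert (H1 : d (f c) (f x) < eps / 2) by (apply Hr; lra).
    assert (H2 : d (f c) (f y) < eps / 2).
    { apply Hr. pose proof (met_tri d hm c x y). lra. }
    pose proof (met_tri d hm (f x) (f c) (f y)). rewrite (met_sym d hm (f x) (f c)) in *. lra.
Qed.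

Lemma finite_net r : 0 < r -> exists l : list T, forall x, exists c, In c l /\ d c x < r.
Proof.
  intros Hr. destruct (compact_ball_subcover (fun _ r' => r' = r)) as (l & Hl & Hcov).
  - intros x. exists r. auto.
  - exists (map fst l). intros x. destruct (Hcov x) as (p & Hp & Hx).
    exists (fst p). split; [now apply in_map|]. now rewrite <- (proj2 (Hl p Hp)).
Qed.

Lemma open_cover_balls (l : list T) r : (forall x, exists c, In c l /\ d c x < r) ->
  open_cover d (map (fun c x => d c x < r) l).
Proof.
  intros Hl. split.
  - intros A HA. apply in_map_iff in HA. destruct HA as (c & <- & _). now apply m_open_ball.
  - intros x. destruct (Hl x) as (c & Hc & Hx).
    exists (fun x => d c x < r). split; [now apply (in_map (fun c x => d c x < r)) | exact Hx].
Qed.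

End Compact.

Section Product.
Context {A B : Type} (dA : A -> A -> R) (dB : B -> B -> R).

Lemma dprod_lt p q e :
  dA (fst p) (fst q) < e -> dB (snd p) (snd q) < e -> dprod dA dB p q < e.
Proof. intros. now apply Rmax_lub_lt. Qed.

Lemma dprod_lt_inv p q e :
  dprod dA dB p q < e -> dA (fst p) (fst q) < e /\ dB (snd p) (snd q) < e.
Proof.
  unfold dprod. pose proof (Rmax_l (dA (fst p) (fst q)) (dB (snd p) (snd q))).
  pose proof (Rmax_r (dA (fst p) (fst q)) (dB (snd p) (snd q))). lra.
Qed.

Lemma m_open_fst (O : A -> Prop) : m_open dA O -> m_open (dprod dA dB) (fun q => O (fst q)).
Proof.
  intros H q Hq. destruct (H _ Hq) as (e & He & Hball). exists e. split; auto.
  intros q' Hq'. apply Hball, (dprod_lt_inv _ _ _ Hq').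
Qed.

Lemma m_open_snd (O : B -> Prop) : m_open dB O -> m_open (dprod dA dB) (fun q => O (snd q)).
Proof.
  intros H q Hq. destruct (H _ Hq) as (e & He & Hball). exists e. split; auto.
  intros q' Hq'. apply Hball, (dprod_lt_inv _ _ _ Hq').
Qed.

Hypotheses (hA : is_metric dA) (hB : is_metric dB).

Lemma is_metric_dprod : is_metric (dprod dA dB).
Proof.
  unfold dprod. split; [|split; [|split]].
  - intros x y. eapply Rle_trans; [apply (met_pos dA hA) | apply Rmax_l].
  - intros [x1 x2] [y1 y2]; simpl. split.
    + intros H. pose proof (met_pos dA hA x1 y1). pose proof (met_pos dB hB x2 y2).
      pose proof (Rmax_l (dA x1 y1) (dB x2 y2)). pose proof (Rmax_r (dA x1 y1) (dB x2 y2)).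
      assert (E1 : dA x1 y1 = 0) by lra. assert (E2 : dB x2 y2 = 0) by lra.
      apply hA in E1. apply hB in E2. now subst.
    + intros H. inversion H. subst. rewrite (met_refl dA hA), (met_refl dB hB).
      apply Rmax_left. lra.
  - intros x y. now rewrite (met_sym dA hA), (met_sym dB hB).
  - intros x y z. pose proof (met_tri dA hA (fst x) (fst y) (fst z)).
    pose proof (met_tri dB hB (snd x) (snd y) (snd z)).
    pose proof (Rmax_l (dA (fst x) (fst y)) (dB (snd x) (snd y))).
    pose proof (Rmax_r (dA (fst x) (fst y)) (dB (snd x) (snd y))).
    pose proof (Rmax_l (dA (fst y) (fst z)) (dB (snd y) (snd z))).
    pose proof (Rmax_r (dA (fst y) (fst z)) (dB (snd y) (snd z))).
    apply Rmax_lub; lra.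
Qed.

Hypotheses (cA : m_compact dA) (cB : m_compact dB).

Lemma tube_lemma {I} (O : I -> A * B -> Prop) (z : A) :
  (forall i, m_open (dprod dA dB) (O i)) -> (forall y, exists i, O i (z, y)) ->
  exists r li, 0 < r /\ forall z' y', dA z z' < r -> exists i, In i li /\ O i (z', y').
Proof.
  intros HO Hcov.
  destruct (compact_ball_subcover dB hB cB
              (fun y r => exists i, forall z' y', dA z z' < r -> dB y y' < r -> O i (z', y')))
    as (l & Hl & Hlcov).
  - intros y. destruct (Hcov y) as (i & Hi). destruct (HO i _ Hi) as (e & He & Hball).
    exists e. split; [exact He|]. exists i. intros z' y' Hz Hy. now apply Hball, dprod_lt.
  - destruct (list_choice _ l (fun p Hp => proj2 (Hl p Hp))) as (li & Hli).
    destruct (list_min_pos l snd) as (r & Hr & Hmin). { intros p Hp. apply Hl, Hp. }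
    exists r, li. split; [exact Hr|]. intros z' y' Hz.
    destruct (Hlcov y') as (p & Hp & Hy). destruct (Hli p Hp) as (i & Hi & HOi).
    exists i. split; [exact Hi|]. pose proof (Hmin p Hp). apply HOi; lra.
Qed.

Lemma m_compact_dprod : m_compact (dprod dA dB).
Proof.
  intros I O HO Hcov.
  destruct (compact_ball_subcover dA hA cA
              (fun z r => exists li,
                 forall z' y', dA z z' < r -> exists i, In i li /\ O i (z', y')))
    as (l & Hl & Hlcov).
  - intros z. destruct (tube_lemma O z HO (fun y => Hcov (z, y))) as (r & li & Hr & Htube).
    eauto.
  - destruct (list_choice _ l (fun p Hp => proj2 (Hl p Hp))) as (lli & Hlli).
    exists (concat lli). intros [z y]. destruct (Hlcov z) as (p & Hp & Hz).
    destruct (Hlli p Hp) as (li & Hli & Htube). destruct (Htube z y Hz) as (i & Hi & HOi).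
    exists i. split; [apply in_concat; eauto | exact HOi].
Qed.

End Product.

(** * The sequence D(U, a, n) *)

Section Dn.
Context {T : Type} (d : T -> T -> R) (hm : is_metric d).
Implicit Types (U V : list (T -> Prop)) (a b : homeo d).

Lemma D_le_Dn a U n : open_cover d U -> D_le d (joinN U (hf a) n) (Dn d U a n).
Proof.
  intros HU. apply Dcov_spec, open_cover_joinN; auto. apply hf_cont.
Qed.

Lemma Dn_le a U n m : open_cover d U -> D_le d (joinN U (hf a) n) m -> (Dn d U a n <= m)%nat.
Proof.
  intros HU. apply Dcov_spec, open_cover_joinN; auto. apply hf_cont.
Qed.

Lemma Dn_subadditive a U m n : open_cover d U ->
  (Dn d U a (m + n) <= Dn d U a m + Dn d U a n + 1)%nat.
Proof.
  intros HU. apply Dn_le; auto.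
  eapply D_le_refines; [apply refines_joinN_add|].
  apply D_le_join; auto; [now apply D_le_Dn|].
  apply D_le_preim; [apply m_cont_iter, hf_cont | now apply D_le_Dn].
Qed.

Lemma Dn_refines a U V n : open_cover d U -> open_cover d V -> refines V U ->
  (Dn d U a n <= Dn d V a n)%nat.
Proof.
  intros HU HV HVU. apply Dn_le; auto.
  eapply D_le_refines; [apply refines_joinN, HVU | now apply D_le_Dn].
Qed.

Lemma unif_cont_iter f : unif_cont d f -> forall j, unif_cont d (Nat.iter j f).
Proof.
  intros Hf j. induction j as [|j IH]; intros e He.
  - exists e. split; auto.
  - destruct (Hf e He) as (e1 & He1 & H1). destruct (IH e1 He1) as (e2 & He2 & H2).
    exists e2. split; [exact He2|]. intros x y Hxy. simpl. now apply H1, H2.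
Qed.

Lemma iter_close f : unif_cont d f ->
  forall j eps, 0 < eps -> exists del, 0 < del /\ forall g : T -> T,
    (forall x, d (f x) (g x) < del) -> forall x, d (Nat.iter j f x) (Nat.iter j g x) < eps.
Proof.
  intros Hf j. induction j as [|j IH]; intros eps Heps.
  - exists 1. split; [lra|]. intros g _ x. simpl. now rewrite (met_refl d hm).
  - destruct (Hf (eps / 2) ltac:(lra)) as (eta & Heta & Hunif).
    destruct (IH eta Heta) as (del & Hdel & Hclose).
    exists (Rmin del (eps / 2)). split; [now apply Rmin_glb_lt; lra|].
    intros g Hg x. simpl.
    assert (Hg1 : forall y, d (f y) (g y) < del).
    { intros y. eapply Rlt_le_trans; [apply Hg | apply Rmin_l]. }
    assert (Hg2 := Hg (Nat.iter j g x)). pose proof (Rmin_r del (eps / 2)).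
    specialize (Hunif _ _ (Hclose g Hg1 x)).
    pose proof (met_tri d hm (f (Nat.iter j f x)) (f (Nat.iter j g x)) (g (Nat.iter j g x))).
    lra.
Qed.

Section CompactSpace.
Hypothesis hc : m_compact d.

Lemma iter_inv_close a n lam : 0 < lam ->
  exists del, 0 < del /\ forall g : T -> T, (forall x, d (hf a x) (g x) < del) ->
    forall j, (j < n)%nat -> forall x, d x (Nat.iter j (hg a) (Nat.iter j g x)) < lam.
Proof.
  intros Hlam.
  assert (Hua := unif_cont_compact d hm hc (hf a) (hf_cont d a)).
  assert (Hug := unif_cont_compact d hm hc (hg a) (hg_cont d a)).
  induction n as [|n IH].
  - exists 1. split; [lra|]. intros; lia.
  - destruct IH as (d1 & Hd1 & H1).
    destruct (unif_cont_iter (hg a) Hug n lam Hlam) as (eta & Heta & He).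
    destruct (iter_close (hf a) Hua n eta Heta) as (d2 & Hd2 & H2).
    exists (Rmin d1 d2). split; [now apply Rmin_glb_lt|].
    intros g Hg j Hj x. destruct (Nat.eq_dec j n) as [-> | Hne].
    + rewrite <- (iter_hg_hf d a n x) at 1. apply He, H2.
      intros y. eapply Rlt_le_trans; [apply Hg | apply Rmin_r].
    + apply H1; [|lia]. intros y. eapply Rlt_le_trans; [apply Hg | apply Rmin_l].
Qed.

(* Each member of [V] is replaced by the points within [lam / 2] of a centre whose
   [lam]-ball lies in it. *)
Lemma open_cover_shrink V : open_cover d V -> exists lam V', 0 < lam /\ open_cover d V' /\
  (forall x, (cnt x V' <= cnt x V)%nat) /\
  forall B, In B V' -> exists A, In A V /\ forall z w, B z -> d z w < lam -> A w.
Proof.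
  intros HV. destruct (lebesgue_number d hm hc V HV) as (lam & Hlam & HL).
  set (shrink := fun (A : T -> Prop) z =>
                   exists y, (forall w, d y w < lam -> A w) /\ d y z < lam / 2).
  exists (lam / 2), (map shrink V). split; [lra|]. split; [split|split].
  - intros E HE. apply in_map_iff in HE. destruct HE as (A & <- & _).
    intros z (y & Hy & Hyz). exists (lam / 2 - d y z). split; [lra|].
    intros w Hw. exists y. split; auto. pose proof (met_tri d hm y z w). lra.
  - intros z. destruct (HL z) as (A & HA & HAz).
    exists (shrink A). split; [now apply in_map|].
    exists z. split; auto. rewrite (met_refl d hm); lra.
  - intros z. rewrite <- (map_id V) at 2. apply cnt_map_le.
    intros A _ (y & Hy & Hyz). apply Hy. lra.
  - intros E HE. apply in_map_iff in HE. destruct HE as (A & <- & HA).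
    exists A. split; [exact HA|]. intros z w (y & Hy & Hyz) Hzw. apply Hy.
    pose proof (met_tri d hm y z w). lra.
Qed.

Lemma Dn_upper_semicont a U n : open_cover d U ->
  exists eps, 0 < eps /\
    forall b, (forall x, d (hf a x) (hf b x) < eps) -> (Dn d U b n <= Dn d U a n)%nat.
Proof.
  intros HU. destruct (D_le_Dn a U n HU) as (V & HV & HVa & HVo).
  destruct (open_cover_shrink V HV) as (lam & V' & Hlam & HV' & HV'cnt & HV'V).
  destruct (iter_inv_close a n lam Hlam) as (del & Hdel & Hclose).
  exists del. split; [exact Hdel|]. intros b Hb. apply Dn_le; auto.
  exists V'. split; [exact HV'|]. split.
  - intros B HB. destruct (HV'V B HB) as (A & HA & HBA).
    destruct (HVa A HA) as (E & HE & HAE). apply joinN_intro. intros j Hj.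
    destruct (joinN_elim U (hf a) n E HE j Hj) as (A0 & HA0 & HEA0).
    exists A0. split; [exact HA0|]. intros z Hz.
    rewrite <- (iter_hf_hg d a j (Nat.iter j (hf b) z)).
    apply HEA0, HAE, (HBA z); [exact Hz | now apply Hclose].
  - intros x. specialize (HV'cnt x). specialize (HVo x). lia.
Qed.

End CompactSpace.
End Dn.

(** * Averages of nearly subadditive sequences *)

(* At [n = 0] this relies on Rocq's convention [/ 0 = 0]. *)
Lemma ratio_nonneg (s : nat -> nat) n : 0 <= INR (s n) / INR n.
Proof.
  destruct n as [|n].
  - simpl. unfold Rdiv. rewrite Rinv_0, Rmult_0_r. lra.
  - apply Rdiv_le_0_compat; [apply pos_INR | apply lt_0_INR; lia].
Qed.

Lemma Lim_seq_ge0 (u : nat -> R) : (forall n, 0 <= u n) -> Rbar_le 0 (Lim_seq u).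
Proof.
  intros H. rewrite <- (Lim_seq_const 0). apply Lim_seq_le_loc. exists 0%nat. auto.
Qed.

Lemma Lim_seq_le_plus_div (u : nat -> R) c K : 0 <= K ->
  (forall n, (0 < n)%nat -> u n <= c + K / INR n) -> Rbar_le (Lim_seq u) c.
Proof.
  intros HK H.
  assert (Heps : forall eps, 0 < eps -> Rbar_le (Lim_seq u) (c + eps)).
  { intros eps Heps. rewrite <- (Lim_seq_const (c + eps)). apply Lim_seq_le_loc.
    destruct (archimed_cor1 (eps / (K + 1))) as (N & HN & HN0); [apply Rdiv_lt_0_compat; lra|].
    exists N. intros n Hn.
    assert (HNpos : 0 < INR N) by (apply lt_0_INR; lia).
    assert (HNn : INR N <= INR n) by (apply le_INR; lia).
    assert (HKN : K + 1 < eps * INR N).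
    { apply (Rmult_lt_compat_r (INR N)) in HN; [|exact HNpos].
      rewrite Rinv_l in HN by lra. unfold Rdiv in HN.
      apply (Rmult_lt_compat_r (K + 1)) in HN; [|lra].
      replace (eps * / (K + 1) * INR N * (K + 1)) with (eps * INR N) in HN by (field; lra).
      lra. }
    assert (HKn : K / INR n <= eps).
    { apply (Rmult_le_reg_r (INR n)); [lra|].
      unfold Rdiv. rewrite Rmult_assoc, Rinv_l, Rmult_1_r by lra. nra. }
    specialize (H n ltac:(lia)). lra. }
  destruct (Lim_seq u) as [r| |]; simpl in *; auto.
  - destruct (Rle_dec r c) as [Hle | Hgt]; auto.
    specialize (Heps ((r - c) / 2) ltac:(lra)). lra.
  - exact (Heps 1 ltac:(lra)).
Qed.

Lemma Lim_seq_ratio_bounded (s : nat -> nat) M : (forall n, (s n <= M)%nat) ->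
  Rbar_le (Lim_seq (fun n => INR (s n) / INR n)) 0.
Proof.
  intros H. apply (Lim_seq_le_plus_div _ 0 (INR M)); [apply pos_INR|].
  intros n Hn. rewrite Rplus_0_l. unfold Rdiv. apply Rmult_le_compat_r.
  - left. apply Rinv_0_lt_compat, lt_0_INR. lia.
  - apply le_INR, H.
Qed.

Section Subadditive.
Variable s : nat -> nat.
Hypothesis hs : forall m n, (s (m + n) <= s m + s n + 1)%nat.

Lemma subadditive_euclid_bound n0 : (0 < n0)%nat ->
  exists C, forall n, (s n <= (n / n0) * (s n0 + 1) + C)%nat.
Proof.
  intros Hn0.
  assert (Hmul : forall q r, (s (q * n0 + r) + 1 <= q * (s n0 + 1) + (s r + 1))%nat).
  { induction q as [|q IH]; intros r; [simpl; lia|].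
    replace (S q * n0 + r)%nat with (n0 + (q * n0 + r))%nat by lia.
    specialize (IH r). specialize (hs n0 (q * n0 + r)). nia. }
  assert (Hbound : forall N, exists C, forall r, (r < N)%nat -> (s r + 1 <= C)%nat).
  { induction N as [|N [C HC]]; [exists 0%nat; intros; lia|].
    exists (Nat.max C (s N + 1)). intros r Hr.
    destruct (Nat.eq_dec r N) as [-> | Hne]; [lia|]. specialize (HC r ltac:(lia)). lia. }
  destruct (Hbound n0) as (C & HC). exists C. intros n.
  rewrite (Nat.div_mod_eq n n0) at 1. rewrite Nat.mul_comm.
  specialize (Hmul (n / n0)%nat (n mod n0)%nat). specialize (HC (n mod n0)%nat).
  assert (Hr : (n mod n0 < n0)%nat) by (apply Nat.mod_upper_bound; lia). lia.
Qed.

Lemma Lim_seq_ratio_subadditive n0 : (0 < n0)%nat ->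
  Rbar_le (Lim_seq (fun n => INR (s n) / INR n)) ((INR (s n0) + 1) / INR n0).
Proof.
  intros Hn0. destruct (subadditive_euclid_bound n0 Hn0) as (C & HC).
  apply (Lim_seq_le_plus_div _ _ (INR C)); [apply pos_INR|]. intros n Hn.
  assert (Hn0R : 0 < INR n0) by (apply lt_0_INR; lia).
  assert (HnR : 0 < INR n) by (apply lt_0_INR; lia).
  assert (Hq : INR (n / n0) * INR n0 <= INR n).
  { rewrite <- mult_INR. apply le_INR. rewrite Nat.mul_comm. now apply Nat.Div0.mul_div_le. }
  assert (Hsn := le_INR _ _ (HC n)). rewrite plus_INR, mult_INR, plus_INR in Hsn. simpl INR in Hsn.
  assert (Hsn0 : 0 <= INR (s n0) + 1) by (pose proof (pos_INR (s n0)); lra).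
  apply (Rmult_le_reg_r (INR n)); [exact HnR|].
  rewrite Rmult_plus_distr_r. unfold Rdiv. rewrite !Rmult_assoc, !Rinv_l, !Rmult_1_r by lra.
  assert (Hkey : INR (n / n0) * (INR (s n0) + 1) <= (INR (s n0) + 1) * (/ INR n0 * INR n)).
  { apply (Rmult_le_reg_r (INR n0)); [exact Hn0R|].
    replace ((INR (s n0) + 1) * (/ INR n0 * INR n) * INR n0)
      with ((INR (s n0) + 1) * INR n) by (field; lra).
    nra. }
  lra.
Qed.

End Subadditive.

Lemma Lim_seq_ratio_lt (s : nat -> nat) (c : R) :
  Rbar_lt (Lim_seq (fun n => INR (s n) / INR n)) c ->
  exists n0, (0 < n0)%nat /\ (INR (s n0) + 1) / INR n0 < c.
Proof.
  set (u := fun n => INR (s n) / INR n). intros Hlt.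
  pose proof (Lim_seq_ge0 u (ratio_nonneg s)) as Hge.
  destruct (Lim_seq u) as [L| |] eqn:EL; simpl in Hlt, Hge; try contradiction.
  destruct (archimed_cor1 ((c - L) / 2)) as (N & HN & HN0); [lra|].
  assert (Hfreq : exists n, (N <= n)%nat /\ u n < (L + c) / 2).
  { apply NNPP. intros Hno.
    assert (Hle : Rbar_le (Lim_seq (fun _ => (L + c) / 2)) (Lim_seq u)).
    { apply Lim_seq_le_loc. exists N. intros n Hn. apply Rnot_lt_le. intros Hc. eauto. }
    rewrite Lim_seq_const, EL in Hle. simpl in Hle. lra. }
  destruct Hfreq as (n & Hn & Hun). exists n. split; [lia|].
  assert (HNpos : 0 < INR N) by (apply lt_0_INR; lia).
  assert (Hinv : / INR n <= / INR N)
    by (apply Rinv_le_contravar; [exact HNpos | apply le_INR; lia]).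
  unfold u in Hun.
  replace ((INR (s n) + 1) / INR n) with (INR (s n) / INR n + / INR n)
    by (field; apply not_0_INR; lia).
  lra.
Qed.

Lemma Rbar_le_0_of_lt_inv (x : Rbar) :
  (forall k, (0 < k)%nat -> Rbar_lt x (Finite (1 / INR k))) -> Rbar_le x 0.
Proof.
  intros H. destruct x as [r| |]; simpl; auto.
  - destruct (Rle_dec r 0) as [Hle | Hgt]; auto.
    destruct (archimed_cor1 r) as (N & HN & HN0); [lra|].
    specialize (H N HN0). simpl in H. unfold Rdiv in H. rewrite Rmult_1_l in H. lra.
  - exact (H 1%nat ltac:(lia)).
Qed.

Section MeanDimension.
Context {T : Type} (d : T -> T -> R) (hm : is_metric d) (hc : m_compact d).

Lemma Dlim_ge0 U a : Rbar_le 0 (Dlim d U a).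
Proof. apply Lim_seq_ge0. intros n. apply ratio_nonneg. Qed.

Lemma Dlim_refines U V a : open_cover d U -> open_cover d V -> refines V U ->
  Rbar_le (Dlim d U a) (Dlim d V a).
Proof.
  intros HU HV HVU. apply Lim_seq_le_loc. exists 0%nat. intros n _.
  destruct n as [|n]; [simpl; unfold Rdiv; rewrite Rinv_0, !Rmult_0_r; lra|].
  apply Rmult_le_compat_r; [left; apply Rinv_0_lt_compat, lt_0_INR; lia|].
  apply le_INR. now apply Dn_refines.
Qed.

(* [n |-> Dn + 1] is subadditive, so the limit is at most [(Dn a n0 + 1) / n0] for every
   [n0]; for fixed [n0] the value [Dn a n0] can only drop under small perturbations of [a]. *)
Lemma Dlim_lt_open U a (c : R) : open_cover d U -> Rbar_lt (Dlim d U a) c ->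
  exists eps, 0 < eps /\
    forall b, (forall x, d (hf a x) (hf b x) < eps) -> Rbar_lt (Dlim d U b) c.
Proof.
  intros HU Hlt. destruct (Lim_seq_ratio_lt _ c Hlt) as (n0 & Hn0 & Hc).
  destruct (Dn_upper_semicont d hm hc a U n0 HU) as (eps & Heps & Husc).
  exists eps. split; [exact Heps|]. intros b Hb.
  eapply Rbar_le_lt_trans.
  { apply Lim_seq_ratio_subadditive; [|exact Hn0]. intros m n. now apply Dn_subadditive. }
  simpl. eapply Rle_lt_trans; [|exact Hc].
  apply Rmult_le_compat_r; [left; apply Rinv_0_lt_compat, lt_0_INR; lia|].
  apply Rplus_le_compat_r, le_INR. now apply Husc.
Qed.

Lemma mdim_eq_0 a : (forall U, open_cover d U -> Rbar_le (Dlim d U a) 0) -> mdim d a = 0.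
Proof.
  intros H.
  assert (Hzero : forall U, open_cover d U -> Dlim d U a = 0).
  { intros U HU. apply Rbar_le_antisym; [now apply H | apply Dlim_ge0]. }
  unfold mdim. apply Rbar_is_lub_unique. split.
  - intros x (U & HU & ->). rewrite Hzero; [apply Rbar_le_refl | exact HU].
  - intros ub Hub. apply Hub. exists ((fun _ => True) :: nil).
    split; [apply open_cover_trivial | symmetry; apply Hzero, open_cover_trivial].
Qed.

Section Basis.
Variables (B : nat -> T -> Prop).
Hypothesis hB : is_base d B.

Lemma open_cover_basic l : basic_cover B l -> open_cover d (map B l).
Proof.
  intros Hl. split.
  - intros A HA. apply in_map_iff in HA. destruct HA as (n & <- & _). apply hB.
  - intros x. destruct (Hl x) as (n & Hn & Hx). exists (B n). split; [now apply in_map | exact Hx].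
Qed.

Lemma basic_refinement U : open_cover d U ->
  exists l, basic_cover B l /\ refines (map B l) U.
Proof.
  intros HU.
  set (I := {n : nat | exists A, In A U /\ forall x, B n x -> A x}).
  destruct (hc I (fun i => B (proj1_sig i))) as (li & Hli).
  - intros i. apply hB.
  - intros x. destruct (proj2 HU x) as (A & HA & Ax).
    destruct (proj2 hB A (proj1 HU A HA) x Ax) as (n & Hn & HnA).
    exists (exist _ n (ex_intro _ A (conj HA HnA)) : I). exact Hn.
  - exists (map (@proj1_sig _ _) li). split.
    + intros x. destruct (Hli x) as (i & Hi & Hx). exists (proj1_sig i).
      split; [now apply in_map | exact Hx].
    + intros E HE. rewrite map_map in HE. apply in_map_iff in HE.
      destruct HE as (i & <- & _). apply (proj2_sig i).
Qed.

Lemma mdim_eq_0_basic a :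
  (forall l, basic_cover B l -> Rbar_le (Dlim d (map B l) a) 0) -> mdim d a = 0.
Proof.
  intros H. apply mdim_eq_0. intros U HU.
  destruct (basic_refinement U HU) as (l & Hl & Href).
  apply (Rbar_le_trans _ (Dlim d (map B l) a)); [|now apply H].
  apply Dlim_refines; auto. now apply open_cover_basic.
Qed.

End Basis.
End MeanDimension.

Lemma hdist_lt_refl {T} (d : T -> T -> R) (hm : is_metric d) (a : homeo d) eps :
  0 < eps -> hdist_lt d a a eps.
Proof.
  intros Heps. exists 0, 0. split; [lra|]. split; intros x; rewrite (met_refl d hm); lra.
Qed.

Lemma hdist_lt_hf {T} (d : T -> T -> R) (hm : is_metric d) (a b : homeo d) eps :
  hdist_lt d a b eps -> forall x, d (hf a x) (hf b x) < eps.
Proof.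
  intros (ea & eb & Hsum & Ha & Hb) x. pose proof (Ha x). pose proof (Hb x).
  pose proof (met_pos d hm (hg a x) (hg b x)). lra.
Qed.

(** * Conjugates of [zeta x id] *)

Section Boxes.
Context {Z Y : Type} (dZ : Z -> Z -> R) (dY : Y -> Y -> R).

Definition box (R0 : Z -> Prop) (C : Y -> Prop) (p : Z * Y) : Prop := R0 (fst p) /\ C (snd p).

Definition boxes (RZ : list (Z -> Prop)) (CY : list (Y -> Prop)) : list (Z * Y -> Prop) :=
  flat_map (fun R0 => map (box R0) CY) RZ.

Lemma in_boxes RZ CY E :
  In E (boxes RZ CY) <-> exists R0 C, In R0 RZ /\ In C CY /\ E = box R0 C.
Proof.
  unfold boxes. rewrite in_flat_map. split.
  - intros (R0 & HR & HE). apply in_map_iff in HE. destruct HE as (C & <- & HC). eauto.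
  - intros (R0 & C & HR & HC & ->). exists R0. split; [exact HR | now apply in_map].
Qed.

Lemma open_cover_boxes RZ CY : open_cover dZ RZ -> open_cover dY CY ->
  open_cover (dprod dZ dY) (boxes RZ CY).
Proof.
  intros [HRo HRc] [HCo HCc]. split.
  - intros E HE. apply in_boxes in HE. destruct HE as (R0 & C & HR & HC & ->).
    apply m_open_and; [apply m_open_fst, HRo | apply m_open_snd, HCo]; assumption.
  - intros p. destruct (HRc (fst p)) as (R0 & HR & Hp1), (HCc (snd p)) as (C & HC & Hp2).
    exists (box R0 C). split; [apply in_boxes; eauto 10 | split; assumption].
Qed.

Lemma cnt_boxes p RZ CY : (cnt p (boxes RZ CY) <= cnt (fst p) RZ * length CY)%nat.
Proof.
  induction RZ as [|R0 RZ IH]; [unfold cnt; simpl; lia|].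
  unfold boxes in *. simpl flat_map. rewrite cnt_app, cnt_cons.
  destruct (asbool (R0 (fst p))) eqn:ER.
  - pose proof (cnt_le_length p (map (box R0) CY)). rewrite length_map in *. lia.
  - rewrite cnt_zero; [simpl; lia|].
    intros E HE. apply in_map_iff in HE. destruct HE as (C & <- & _). intros [HR _].
    apply (asbool_true (R0 (fst p))) in HR. congruence.
Qed.

Hypotheses (hZ : is_metric dZ) (hY : is_metric dY) (cZ : m_compact dZ) (cY : m_compact dY).

(* Cover [Z] by an [m]-dimensional refinement of the [n]-fold join of a net of [lam / 2]-balls,
   and [Y] by a fixed net of [lam / 2]-balls; [id] does not move the second factor. *)
Lemma D_le_joinN_skew_id (zeta : homeo dZ) m W : covdim_le dZ m ->
  open_cover (dprod dZ dY) W ->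
  exists M, forall n, D_le (dprod dZ dY) (joinN W (fun p => (hf zeta (fst p), snd p)) n) M.
Proof.
  intros Hdim HW.
  destruct (lebesgue_number _ (is_metric_dprod dZ dY hZ hY) (m_compact_dprod dZ dY hZ hY cZ cY)
              W HW) as (lam & Hlam & HL).
  destruct (finite_net dZ hZ cZ (lam / 2) ltac:(lra)) as (cz & Hcz).
  destruct (finite_net dY hY cY (lam / 2) ltac:(lra)) as (cy & Hcy).
  set (ballZ := fun c z => dZ c z < lam / 2). set (ballY := fun c y => dY c y < lam / 2).
  assert (HCZ := open_cover_balls dZ hZ cz (lam / 2) Hcz).
  assert (HCY := open_cover_balls dY hY cy (lam / 2) Hcy).
  assert (Hiter : forall j p, Nat.iter j (fun p : Z * Y => (hf zeta (fst p), snd p)) p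
                              = (Nat.iter j (hf zeta) (fst p), snd p)).
  { induction j as [|j IH]; intros [z y]; simpl; [reflexivity|]. now rewrite IH. }
  exists ((m + 1) * length cy)%nat. intros n.
  destruct (Hdim _ (open_cover_joinN dZ _ _ n (hf_cont dZ zeta) HCZ))
    as (RZ & HRZ & HRZr & HRZo).
  exists (boxes RZ (map ballY cy)). split; [now apply open_cover_boxes|]. split.
  - intros E HE. apply in_boxes in HE. destruct HE as (R0 & C & HR & HC & ->).
    apply in_map_iff in HC. destruct HC as (c' & <- & _).
    destruct (HRZr R0 HR) as (E' & HE' & HRE').
    apply joinN_intro. intros j Hj.
    destruct (joinN_elim _ (hf zeta) n E' HE' j Hj) as (A & HA & HE'A).
    apply in_map_iff in HA. destruct HA as (c & <- & _).
    destruct (HL (c, c')) as (A' & HA' & HA'ball). exists A'. split; [exact HA'|].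
    intros p [Hp1 Hp2]. rewrite Hiter. apply HA'ball.
    apply dprod_lt; simpl; [specialize (HE'A _ (HRE' _ Hp1)) | ]; unfold ballZ, ballY in *; lra.
  - intros p. eapply Nat.le_trans; [apply cnt_boxes|]. rewrite length_map.
    specialize (HRZo (fst p)). nia.
Qed.

Lemma Dn_bounded_conj_skew_id (zeta : homeo dZ) (G b : homeo (dprod dZ dY)) U m :
  covdim_le dZ m -> (forall p, hf b p = hg G (hf zeta (fst (hf G p)), snd (hf G p))) ->
  open_cover (dprod dZ dY) U -> exists M, forall n, (Dn (dprod dZ dY) U b n <= M)%nat.
Proof.
  intros Hdim Hb HU.
  destruct (D_le_joinN_skew_id zeta m (preim (hg G) U) Hdim) as (M & HM).
  { apply open_cover_preim; [apply hg_cont | exact HU]. }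
  exists M. intros n. apply Dn_le; [exact HU|].
  eapply D_le_refines;
    [apply (refines_preim_joinN_conj _ G _ (fun p => (hf zeta (fst p), snd p)) U n Hb)|].
  apply D_le_preim; [apply hf_cont | apply HM].
Qed.

End Boxes.

Theorem lemma3p4 (Z Y : Type) (dZ : Z -> Z -> R) (dY : Y -> Y -> R)
  (zeta : homeo dZ)
  (hZmet : is_metric dZ) (hZcpt : m_compact dZ) (hZconn : m_connected dZ)
  (hZinf : m_infinite Z) (hZdim : exists m, covdim_le dZ m)
  (hmin : minimal_homeo dZ zeta)
  (hYmet : is_metric dY) (hYcpt : m_compact dY)
  (B : nat -> Z * Y -> Prop) (hB : is_base (dprod dZ dY) B) :
  (* (1) density *)
  (forall l k, basic_cover B l -> (0 < k)%nat ->
     forall a, in_clS dZ dY zeta a -> forall eps, 0 < eps ->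
       exists b, H_Uk dZ dY zeta B l k b /\ hdist_lt (dprod dZ dY) a b eps) /\
  (* (2) openness relative to the closure *)
  (forall l k, basic_cover B l -> (0 < k)%nat ->
     forall a, H_Uk dZ dY zeta B l k a -> exists eps, 0 < eps /\
       forall b, in_clS dZ dY zeta b -> hdist_lt (dprod dZ dY) a b eps ->
         H_Uk dZ dY zeta B l k b) /\
  (* (3) generic points have mean dimension zero *)
  (forall a, in_clS dZ dY zeta a ->
     (forall l k, basic_cover B l -> (0 < k)%nat -> H_Uk dZ dY zeta B l k a) ->
     mdim (dprod dZ dY) a = Finite 0).
Proof.
  assert (hX := is_metric_dprod dZ dY hZmet hYmet).
  assert (cX := m_compact_dprod dZ dY hZmet hYmet hZcpt hYcpt).
  split; [|split].
  - intros l k Hl Hk a Ha eps Heps. destruct (Ha eps Heps) as (b & Hb & Hab).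
    exists b. split; [split|exact Hab].
    + intros e He. exists b. split; [exact Hb | now apply hdist_lt_refl].
    + destruct hZdim as (m & Hdim). destruct Hb as (G & _ & _ & _ & Hconj).
      destruct (Dn_bounded_conj_skew_id dZ dY hZmet hYmet hZcpt hYcpt zeta G b (map B l) m Hdim
                  Hconj (open_cover_basic _ B hB l Hl)) as (M & HM).
      eapply Rbar_le_lt_trans; [apply (Lim_seq_ratio_bounded _ M HM)|].
      simpl. apply Rdiv_lt_0_compat; [lra | now apply lt_0_INR].
  - intros l k Hl Hk a [Ha Hlt].
    destruct (Dlim_lt_open _ hX cX (map B l) a _ (open_cover_basic _ B hB l Hl) Hlt)
      as (eps & Heps & Hopen).
    exists eps. split; [exact Heps|]. intros b Hb Hab. split; [exact Hb|].
    apply Hopen. now apply hdist_lt_hf.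
  - intros a _ Hall. apply (mdim_eq_0_basic _ cX B hB). intros l Hl.
    apply Rbar_le_0_of_lt_inv. intros k Hk. apply (Hall l k Hl Hk).
Qed.
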